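(* Let $\gamma$ be a smooth curve in $\mathbb{R}^2\setminus\{0\}$, star-shaped with respect to the origin, with nowhere vanishing centroaffine curvature, and such that at no point of $\gamma$ does its osculating Kepler conic hyper-osculate (i.e. have contact of order at least 3 with $\gamma$). Then the osculating Kepler conics of $\gamma$ at any two distinct points are disjoint (equivalently, nested).
   Context: For $v=(a,b,c)\in\mathbb{R}^3$ with $c>0$, the Kepler conic $K(v)$ is the orthogonal projection to the $(x,y)$-plane of the intersection of the cone $x^2+y^2=z^2$ in $\mathbb{R}^3$ with the plane $ax+by+cz=1$; these are conics with a focus at the origin (ellipses when $-a^2-b^2+c^2>0$, parabolas when $=0$, hyperbolas when $<0$). A curve is star-shaped with respect to the origin if $[\gamma,\gamma']\neq0$, where $[u,v]$ is the $2\times2$ determinant; parametrizing so that $[\gamma,\gamma']=1$, the centroaffine curvature $p$ is defined by $\gamma''=-p\gamma$. The osculating Kepler conic at a point of $\gamma$ is the Kepler conic having contact of order at least 2 with $\gamma$ at that point. *)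

From Stdlib Require Import Reals.
From Coquelicot Require Import Coquelicot.
Open Scope R_scope.

Definition det2 (u v : R * R) : R := fst u * snd v - snd u * fst v.

(* A plane curve gamma = (gx, gy) : R -> R^2, considered on the open
   interval (a,b) with a, b in the extended reals (so R itself is allowed). *)
Definition in_itv (a b : Rbar) (t : R) : Prop := Rbar_lt a t /\ Rbar_lt t b.

Definition pt (gx gy : R -> R) (t : R) : R * R := (gx t, gy t).
Definition vel (gx gy : R -> R) (t : R) : R * R := (Derive gx t, Derive gy t).
Definition acc (gx gy : R -> R) (t : R) : R * R :=
  (Derive_n gx 2 t, Derive_n gy 2 t).

Definition smooth_on (a b : Rbar) (f : R -> R) : Prop :=
  forall (n : nat) (t : R), in_itv a b t -> ex_derive_n f n t.

Definition star_shaped (a b : Rbar) (gx gy : R -> R) : Prop :=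
  forall t, in_itv a b t -> det2 (pt gx gy t) (vel gx gy t) <> 0.

(* Centroaffine curvature p, written in an arbitrary parameter t.
   If s is a parameter with ds/dt = w := [gamma, gamma'], then
   [gamma, gamma_s] = 1 and gamma_ss = - p gamma, so
   p = [gamma_s, gamma_ss] = [gamma', gamma''] / w^3. *)
Definition centroaffine_curvature (gx gy : R -> R) (t : R) : R :=
  det2 (vel gx gy t) (acc gx gy t) / (det2 (pt gx gy t) (vel gx gy t)) ^ 3.

(* Kepler conic K(v), v = (a,b,c): projection to the (x,y)-plane of
   {x^2+y^2 = z^2} ∩ {a x + b y + c z = 1}. *)
Definition kepler_conic (v : R * R * R) (q : R * R) : Prop :=
  let '(ka, kb, kc) := v in
  exists z : R, fst q ^ 2 + snd q ^ 2 = z ^ 2 /\ ka * fst q + kb * snd q + kc * z = 1.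

(* A defining function of K(v) (for c > 0 its zero set is exactly K(v),
   and its gradient does not vanish on K(v)). *)
Definition kepler_eq (v : R * R * R) (q : R * R) : R :=
  let '(ka, kb, kc) := v in
  kc ^ 2 * (fst q ^ 2 + snd q ^ 2) - (1 - ka * fst q - kb * snd q) ^ 2.

(* K(v) has contact of order at least k with gamma at gamma(t):
   kepler_eq v o gamma vanishes to order k+1 at t. *)
Definition contact_ge (gx gy : R -> R) (t : R) (v : R * R * R) (k : nat) : Prop :=
  forall j : nat, (j <= k)%nat ->
    Derive_n (fun s => kepler_eq v (pt gx gy s)) j t = 0.

Definition is_kepler (v : R * R * R) : Prop := let '(_, _, kc) := v in 0 < kc.

Definition osculating_kepler (gx gy : R -> R) (t : R) (v : R * R * R) : Prop :=
  is_kepler v /\ contact_ge gx gy t v 2.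

Definition hyperosculates (gx gy : R -> R) (t : R) : Prop :=
  exists v, osculating_kepler gx gy t v /\ contact_ge gx gy t v 3.

(* Lift gamma = (x, y) to the cone: Gamma = (x, y, r), r = |gamma|.  Since
   K(a,b,c) is the shadow of the plane a x + b y + c z = 1, the osculating
   Kepler conic at t is K(w1, w2, |w3|), where w(t) is the normal of the
   plane osculating Gamma at t: w . Gamma = 1, w . Gamma' = w . Gamma'' = 0,
   i.e. w = (Gamma' x Gamma'') / D with D = det (Gamma, Gamma', Gamma'') and
   D r^3 = [gamma, gamma']^3 <> 0.  Differentiating, w' = lambda (Gamma x Gamma')
   where lambda <> 0 exactly because gamma never hyper-osculates, and
   Gamma x Gamma' is null for a^2 + b^2 - s^2 with time component
   [gamma, gamma'] <> 0.  So w is a time-oriented null curve whose direction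
   is never locally constant, hence every chord w(t2) - w(t1) is timelike;
   as w3 = [gamma', gamma''] / D keeps its sign, the two conics are disjoint. *)
From Stdlib Require Import Reals Lra Psatz Ranalysis5.
From Coquelicot Require Import Coquelicot.
Open Scope R_scope.

Definition det3 (a1 a2 a3 b1 b2 b3 c1 c2 c3 : R) : R :=
  a1*(b2*c3-b3*c2) - a2*(b1*c3-b3*c1) + a3*(b1*c2-b2*c1).

(* The derivatives of order 0..3 of the Kepler defining function
   c^2 (x^2+y^2) - (1 - a x - b y)^2 along a curve with jet (x_k, y_k). *)
Definition kepler_jet (a b c x0 y0 x1 y1 x2 y2 x3 y3 : R) (j : nat) : R :=
  match j with
  | 0%nat => c^2*(x0^2 + y0^2) - (1 - a*x0 - b*y0)^2
  | 1%nat => 2*c^2*(x0*x1 + y0*y1) + 2*(1 - a*x0 - b*y0)*(a*x1 + b*y1)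
  | 2%nat => 2*c^2*(x1^2 + y1^2 + x0*x2 + y0*y2)
             + 2*(1 - a*x0 - b*y0)*(a*x2 + b*y2) - 2*(a*x1 + b*y1)^2
  | _ => 2*c^2*(3*x1*x2 + 3*y1*y2 + x0*x3 + y0*y3)
         + 2*(1 - a*x0 - b*y0)*(a*x3 + b*y3) - 6*(a*x1 + b*y1)*(a*x2 + b*y2)
  end.

(* Cramer's rule for the plane a x + b y + s z = 1 through a point P0 and
   containing the directions P1, P2: the explicit solution, and the value of
   the linear form on a fourth vector P3. *)
Lemma cramer_solution x0 y0 r0 x1 y1 r1 x2 y2 r2 x3 y3 r3 :
  det3 x0 y0 r0 x1 y1 r1 x2 y2 r2 <> 0 ->
  let D := det3 x0 y0 r0 x1 y1 r1 x2 y2 r2 in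
  let a := (y1*r2 - r1*y2) / D in
  let b := (r1*x2 - x1*r2) / D in
  let s := (x1*y2 - y1*x2) / D in
  a*x0+b*y0+s*r0 = 1 /\ a*x1+b*y1+s*r1 = 0 /\ a*x2+b*y2+s*r2 = 0 /\
  a*x3+b*y3+s*r3 = det3 x1 y1 r1 x2 y2 r2 x3 y3 r3 / D.
Proof.
  intros HD D a b s; unfold a, b, s, D, det3 in *.
  repeat split; field; exact HD.
Qed.

Lemma cramer_unique x0 y0 r0 x1 y1 r1 x2 y2 r2 a b s :
  det3 x0 y0 r0 x1 y1 r1 x2 y2 r2 <> 0 ->
  a*x0+b*y0+s*r0 = 1 -> a*x1+b*y1+s*r1 = 0 -> a*x2+b*y2+s*r2 = 0 ->
  a = (y1*r2 - r1*y2) / det3 x0 y0 r0 x1 y1 r1 x2 y2 r2 /\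
  b = (r1*x2 - x1*r2) / det3 x0 y0 r0 x1 y1 r1 x2 y2 r2 /\
  s = (x1*y2 - y1*x2) / det3 x0 y0 r0 x1 y1 r1 x2 y2 r2.
Proof.
  intros HD P0 P1 P2.
  set (D := det3 x0 y0 r0 x1 y1 r1 x2 y2 r2) in *.
  (* each unknown times D is a combination of the three equations *)
  assert (Ea : D*a = y1*r2 - r1*y2).
  { transitivity ((a*x0+b*y0+s*r0)*(y1*r2 - r1*y2) + (a*x1+b*y1+s*r1)*(y2*r0 - r2*y0)
                  + (a*x2+b*y2+s*r2)*(y0*r1 - r0*y1)); [unfold D, det3; ring|].
    rewrite P0, P1, P2; ring. }
  assert (Eb : D*b = r1*x2 - x1*r2).
  { transitivity ((a*x0+b*y0+s*r0)*(r1*x2 - x1*r2) + (a*x1+b*y1+s*r1)*(r2*x0 - x2*r0)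
                  + (a*x2+b*y2+s*r2)*(r0*x1 - x0*r1)); [unfold D, det3; ring|].
    rewrite P0, P1, P2; ring. }
  assert (Es : D*s = x1*y2 - y1*x2).
  { transitivity ((a*x0+b*y0+s*r0)*(x1*y2 - y1*x2) + (a*x1+b*y1+s*r1)*(x2*y0 - y2*x0)
                  + (a*x2+b*y2+s*r2)*(x0*y1 - y0*x1)); [unfold D, det3; ring|].
    rewrite P0, P1, P2; ring. }
  rewrite <- Ea, <- Eb, <- Es.
  repeat split; field; exact HD.
Qed.

Section ConeJet.
(* The jet (x_k, y_k), k <= 3, of a plane curve at a point away from the
   origin, together with the jet r_k of its radius r = sqrt (x^2 + y^2):
   (x_k, y_k, r_k) is the jet of the lift of the curve to the cone. *)
Variables x0 y0 r0 x1 y1 r1 x2 y2 r2 x3 y3 r3 : R.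
Hypothesis r0_pos : 0 < r0.
Hypothesis cone0 : r0^2 = x0^2 + y0^2.
Hypothesis cone1 : r0*r1 = x0*x1 + y0*y1.
Hypothesis cone2 : r0*r2 = x1^2 + y1^2 + x0*x2 + y0*y2 - r1^2.
Hypothesis cone3 : r0*r3 = 3*x1*x2 + 3*y1*y2 + x0*x3 + y0*y3 - 3*r1*r2.

(* det (Gamma, Gamma', Gamma'') r^3 = [gamma, gamma']^3: the lifted curve is
   nondegenerate exactly where the plane curve is star-shaped. *)
Lemma lift_det_cube :
  det3 x0 y0 r0 x1 y1 r1 x2 y2 r2 * r0^3 = (x0*y1 - y0*x1)^3.
Proof.
  set (q := x0^2+y0^2) in *. set (P := x0*x1+y0*y1) in *.
  set (S := x1^2+y1^2+x0*x2+y0*y2) in *.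
  set (W := x0*y1 - y0*x1). set (W' := x0*y2 - y0*x2). set (K := x1*y2 - y1*x2).
  transitivity (W^3 + r0^2*W*(r0*r2 - (S - r1^2)) - (r0^2*W' + W*(r0*r1+P))*(r0*r1 - P)
                + (W*S - W'*P + (r0^2+q)*K)*(r0^2 - q)).
  - unfold det3, W, W', K, S, P, q. ring.
  - rewrite cone1, cone2, cone0. ring.
Qed.

(* Gamma x Gamma' is a null vector of the Lorentz form a^2 + b^2 - s^2,
   with time component [gamma, gamma']. *)
Lemma lift_cross_null :
  (y0*r1 - r0*y1)^2 + (r0*x1 - x0*r1)^2 = (x0*y1 - y0*x1)^2.
Proof.
  set (q := x0^2+y0^2) in *. set (P := x0*x1+y0*y1) in *.
  transitivity ((x0*y1-y0*x1)^2 - r1^2*(r0^2 - q) + (r0*r1 - P)*(r0*r1+P)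
                + (r0^2 - q)*(x1^2+y1^2) - 2*P*(r0*r1 - P)).
  - unfold q, P. ring.
  - rewrite cone0, cone1. ring.
Qed.

(* Contact of order 2 of the Kepler conic K(a,b,c) with the curve means that
   the plane a x + b y + s z = 1, with s = +-c, osculates the lifted curve. *)
Lemma kepler_contact_osculating_plane a b c :
  0 < c -> (forall j, (j <= 2)%nat -> kepler_jet a b c x0 y0 x1 y1 x2 y2 x3 y3 j = 0) ->
  exists s, c^2 = s^2 /\ a*x0+b*y0+s*r0 = 1 /\ a*x1+b*y1+s*r1 = 0 /\ a*x2+b*y2+s*r2 = 0.
Proof.
  intros Hc K.
  pose proof (K 0%nat ltac:(lia)) as K0. pose proof (K 1%nat ltac:(lia)) as K1.
  pose proof (K 2%nat ltac:(lia)) as K2. cbn [kepler_jet] in K0, K1, K2.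
  set (s := (1 - a*x0 - b*y0)/r0).
  assert (HL : 1 - a*x0 - b*y0 = s*r0) by (unfold s; field; lra).
  rewrite HL in K0, K1, K2. rewrite <- cone0 in K0. rewrite <- cone1 in K1.
  assert (HS : x1^2+y1^2+x0*x2+y0*y2 = r0*r2 + r1^2) by lra.
  rewrite HS in K2.
  assert (Hcs : c^2 = s^2).
  { assert (E0 : (c^2 - s^2)*(r0^2) = 0) by (rewrite <- K0; ring).
    apply Rmult_integral in E0. destruct E0 as [E0|E0]; [lra|nra]. }
  assert (Hsr : s*r0 <> 0) by (intro Z; apply Rmult_integral in Z; nra).
  rewrite Hcs in K1, K2.
  assert (P1 : a*x1+b*y1+s*r1 = 0).
  { assert (E1 : (2*(s*r0))*(a*x1+b*y1+s*r1) = 0) by (rewrite <- K1; ring).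
    apply Rmult_integral in E1. destruct E1 as [E1|E1]; [lra|exact E1]. }
  exists s. split; [exact Hcs|]. split; [lra|]. split; [exact P1|].
  assert (HA1 : a*x1+b*y1 = -(s*r1)) by lra. rewrite HA1 in K2.
  assert (E2 : (2*(s*r0))*(a*x2+b*y2+s*r2) = 0) by (rewrite <- K2; ring).
  apply Rmult_integral in E2. destruct E2 as [E2|E2]; [lra|exact E2].
Qed.

Lemma osculating_plane_kepler_contact a b s c :
  c^2 = s^2 ->
  a*x0+b*y0+s*r0 = 1 -> a*x1+b*y1+s*r1 = 0 -> a*x2+b*y2+s*r2 = 0 -> a*x3+b*y3+s*r3 = 0 ->
  forall j, (j <= 3)%nat -> kepler_jet a b c x0 y0 x1 y1 x2 y2 x3 y3 j = 0.
Proof.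
  intros Hc P0 P1 P2 P3 j Hj.
  assert (HL : 1 - a*x0 - b*y0 = s*r0) by lra.
  assert (A1 : a*x1+b*y1 = -(s*r1)) by lra.
  assert (A2 : a*x2+b*y2 = -(s*r2)) by lra.
  assert (A3 : a*x3+b*y3 = -(s*r3)) by lra.
  assert (S2 : x1^2+y1^2+x0*x2+y0*y2 = r0*r2 + r1^2) by lra.
  assert (S3 : 3*x1*x2 + 3*y1*y2 + x0*x3 + y0*y3 = r0*r3 + 3*r1*r2) by lra.
  destruct j as [|[|[|[|j]]]]; [| | | |lia]; cbn [kepler_jet];
    rewrite ?HL, ?A1, ?A2, ?A3, ?S2, ?S3, Hc, <- ?cone0, <- ?cone1; ring.
Qed.

Lemma null_direction_radial e1 e2 :
  e1^2 + e2^2 = 1 -> x0*y1 - y0*x1 <> 0 ->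
  (y0*r1 - r0*y1) * e2 = (r0*x1 - x0*r1) * e1 ->
  e2*x0 - e1*y0 = 0.
Proof.
  intros He HW Hp.
  pose proof lift_cross_null as HN.
  set (N1 := y0*r1 - r0*y1) in *. set (N2 := r0*x1 - x0*r1) in *.
  assert (Lag : (N1*e2 - N2*e1)^2 + (e1*N1+e2*N2)^2 = (N1^2+N2^2)*(e1^2+e2^2)) by ring.
  rewrite He, HN, Hp in Lag.
  assert (HeN : e1*N1+e2*N2 <> 0).
  { intro Q. rewrite Q in Lag. apply HW. nra. }
  assert (Id : (e2*x0 - e1*y0)*(e1*N1+e2*N2) + (e1*x0+e2*y0)*(e1*N2 - e2*N1)
     = (e1^2+e2^2)*(r0*(x0*x1+y0*y1) - r1*(x0^2+y0^2))) by (unfold N1, N2; ring).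
  rewrite <- cone0, <- cone1 in Id.
  assert (Z2 : e1*N2 - e2*N1 = 0) by lra.
  rewrite Z2 in Id.
  assert (Z : (e2*x0 - e1*y0)*(e1*N1+e2*N2) = 0) by lra.
  apply Rmult_integral in Z. destruct Z; [assumption|contradiction].
Qed.

End ConeJet.

Lemma orthogonal_to_unit_parallel x0 y0 x1 y1 e1 e2 :
  e1^2 + e2^2 = 1 -> e2*x0 - e1*y0 = 0 -> e2*x1 - e1*y1 = 0 -> x0*y1 - y0*x1 = 0.
Proof.
  intros He Z0 Z1.
  transitivity ((x0*y1 - y0*x1) * (e1^2+e2^2)); [rewrite He; ring|].
  transitivity ((e1*x1 + e2*y1)*(e2*x0 - e1*y0) - (e1*x0 + e2*y0)*(e2*x1 - e1*y1)); [ring|].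
  rewrite Z0, Z1. ring.
Qed.

(* A plane through the apex with timelike normal (d1, d2, m) meets the cone
   q1^2 + q2^2 = z^2 only at the apex (Cauchy-Schwarz). *)
Lemma timelike_plane_meets_cone_at_apex d1 d2 m q1 q2 z :
  d1^2 + d2^2 < m^2 -> z^2 = q1^2 + q2^2 -> d1*q1 + d2*q2 + m*z = 0 -> z = 0.
Proof.
  intros Hm Hz Hp.
  assert (CS : (m*z)^2 + (d1*q2 - d2*q1)^2 = (d1^2 + d2^2)*z^2).
  { replace (m*z) with (-(d1*q1 + d2*q2)) by lra. rewrite Hz. ring. }
  destruct (Req_dec z 0) as [|Hz0]; [assumption|exfalso].
  pose proof (pow2_gt_0 z Hz0). pose proof (pow2_ge_0 (d1*q2 - d2*q1)).
  assert (E : (m*z)^2 = m^2*z^2) by ring.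
  assert (0 < (m^2 - (d1^2 + d2^2)) * z^2) by (apply Rmult_lt_0_compat; lra).
  lra.
Qed.

Lemma timelike_separated_kepler_conics_disjoint a1 b1 s1 a2 b2 s2 q :
  (a2-a1)^2 + (b2-b1)^2 < (s2-s1)^2 -> 0 < s1*s2 ->
  kepler_conic (a1, b1, Rabs s1) q -> kepler_conic (a2, b2, Rabs s2) q -> False.
Proof.
  intros HT Hs [z1 [Q1 E1]] [z2 [Q2 E2]].
  destruct q as [q1 q2]; cbn [fst snd] in *.
  assert (Heps : exists e, e*e = 1 /\ Rabs s1 = e*s1 /\ Rabs s2 = e*s2).
  { destruct (Rlt_or_le 0 s1) as [P|N].
    - assert (0 < s2) by nra. exists 1. rewrite !Rabs_right by lra. repeat split; ring.
    - assert (s1 < 0) by (destruct N as [|E]; [lra|rewrite E in Hs; lra]).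
      assert (s2 < 0) by nra.
      exists (-1). rewrite !Rabs_left by lra. repeat split; ring. }
  destruct Heps as [e [He [A1 A2]]]. rewrite A1 in E1. rewrite A2 in E2.
  assert (Hz : z2 = z1 \/ z2 = - z1).
  { assert (Hm : (z2 - z1)*(z2+z1) = 0) by nra. apply Rmult_integral in Hm. lra. }
  assert (Hz1 : z1 = 0).
  { destruct Hz as [-> | ->].
    - apply (timelike_plane_meets_cone_at_apex (a2-a1) (b2-b1) (e*(s2-s1)) q1 q2 z1);
        [nra|lra|lra].
    - apply (timelike_plane_meets_cone_at_apex (a2-a1) (b2-b1) (-(e*(s2+s1))) q1 q2 z1);
        [nra|lra|lra]. }
  subst z1. assert (q1 = 0 /\ q2 = 0) as [-> ->] by nra. lra.
Qed.

Lemma nonvanishing_constant_sign (f : R -> R) t1 t2 :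
  (forall x, t1 <= x <= t2 -> continuity_pt f x) ->
  (forall x, t1 <= x <= t2 -> f x <> 0) ->
  forall x, t1 <= x <= t2 -> 0 < f t1 * f x.
Proof.
  intros Hc Hz x Hx.
  assert (H1 : f t1 <> 0) by (apply Hz; lra).
  assert (H2 : f x <> 0) by (apply Hz; lra).
  destruct (Rlt_or_le 0 (f t1 * f x)) as [P|N]; [exact P|exfalso].
  assert (Hlt : t1 < x).
  { destruct (Req_dec x t1) as [->|Hne]; [|lra]. pose proof (pow2_gt_0 _ H1). nra. }
  assert (Hc' : forall y, t1 <= y <= x -> continuity_pt f y) by (intros; apply Hc; lra).
  destruct (Rlt_or_le (f t1) 0) as [Ha|Ha].
  - assert (Hb : 0 < f x) by (destruct (Rlt_or_le 0 (f x)); [assumption|]; nra).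
    destruct (IVT_interv f t1 x Hc' Hlt Ha Hb) as [z [Hz1 Hz2]].
    apply (Hz z); [lra|exact Hz2].
  - assert (Hb : f x < 0) by (destruct (Rlt_or_le (f x) 0); [assumption|]; nra).
    assert (Hc'' : forall y, t1 <= y <= x -> continuity_pt (fun y => - f y) y)
      by (intros; apply continuity_pt_opp, Hc'; assumption).
    destruct (IVT_interv (fun y => - f y) t1 x Hc'' Hlt ltac:(lra) ltac:(lra)) as [z [Hz1 Hz2]].
    apply (Hz z); lra.
Qed.

Lemma is_derive_continuity_pt f x l : is_derive f x l -> continuity_pt f x.
Proof.
  intro H. apply derivable_continuous_pt. exists l. apply is_derive_Reals. exact H.
Qed.

Lemma in_itv_locally a b t : in_itv a b t -> locally t (in_itv a b).
Proof.
  intros [H1 H2].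
  generalize (filter_and _ _ (open_Rbar_gt' (Finite t) a H1) (open_Rbar_lt' (Finite t) b H2)).
  apply filter_imp. intros x Hx. exact Hx.
Qed.

Lemma locally_between t1 t2 x : t1 < x < t2 -> locally x (fun y => t1 < y < t2).
Proof. exact (in_itv_locally (Finite t1) (Finite t2) x). Qed.

Lemma is_derive_locally_const f x l c :
  locally x (fun y => f y = c) -> is_derive f x l -> l = 0.
Proof.
  intros Hloc Hd.
  assert (Hc : is_derive (fun _ => c) x l).
  { apply (is_derive_ext_loc f); [|exact Hd]. exact Hloc. }
  rewrite <- (is_derive_unique _ _ _ Hc). apply Derive_const.
Qed.

Section Monotone.
Variables (h h' : R -> R) (t1 t2 : R).
Hypothesis h_deriv : forall x, t1 <= x <= t2 -> is_derive h x (h' x).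
Hypothesis h'_nonneg : forall x, t1 <= x <= t2 -> 0 <= h' x.

Lemma nondecreasing_of_derive_nonneg x y : t1 <= x -> x <= y -> y <= t2 -> h x <= h y.
Proof.
  intros Hx Hxy Hy. destruct (Req_dec x y) as [->|Hne]; [lra|].
  destruct (MVT_gen h x y h') as [c [Hc Hc2]].
  - intros z Hz. rewrite Rmin_left in Hz by lra. rewrite Rmax_right in Hz by lra.
    apply h_deriv. lra.
  - intros z Hz. rewrite Rmin_left in Hz by lra. rewrite Rmax_right in Hz by lra.
    apply (is_derive_continuity_pt _ _ (h' z)). apply h_deriv. lra.
  - rewrite Rmin_left in Hc by lra. rewrite Rmax_right in Hc by lra.
    assert (0 <= h' c) by (apply h'_nonneg; lra). nra.
Qed.

Lemma derive_zero_of_not_increasing :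
  h t2 <= h t1 -> forall x, t1 < x < t2 -> h' x = 0.
Proof.
  intros Hflat x Hx.
  apply (is_derive_locally_const h x (h' x) (h t1)); [|apply h_deriv; lra].
  generalize (locally_between t1 t2 x Hx). apply filter_imp. intros y Hy.
  assert (h t1 <= h y) by (apply nondecreasing_of_derive_nonneg; lra).
  assert (h y <= h t2) by (apply nondecreasing_of_derive_nonneg; lra).
  lra.
Qed.

End Monotone.

Lemma null_vector_time_dominates s l n1 n2 n3 e1 e2 :
  s * s = 1 -> n1^2 + n2^2 = n3^2 -> e1^2 + e2^2 = 1 -> 0 < s * (l * n3) ->
  e1 * (l * n1) + e2 * (l * n2) <= s * (l * n3) /\
  (e1 * (l * n1) + e2 * (l * n2) = s * (l * n3) -> n1 * e2 = n2 * e1).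
Proof.
  intros Hs Hn He Ht.
  set (m := e1 * n1 + e2 * n2).
  assert (Lag : (n1*e2 - n2*e1)^2 + m^2 = n3^2).
  { rewrite <- Hn. transitivity ((n1^2+n2^2)*(e1^2+e2^2)); [unfold m; ring|].
    rewrite He. ring. }
  assert (Hsq : (l*m)^2 + l^2*(n1*e2 - n2*e1)^2 = (s*(l*n3))^2).
  { replace ((s*(l*n3))^2) with ((s*s)*(l^2*n3^2)) by ring.
    rewrite Hs, <- Lag. ring. }
  assert (Hdev : 0 <= l^2*(n1*e2 - n2*e1)^2)
    by (apply Rmult_le_pos; apply pow2_ge_0).
  replace (e1 * (l * n1) + e2 * (l * n2)) with (l*m) by (unfold m; ring).
  split.
  - destruct (Rle_or_lt (l*m) (s*(l*n3))) as [Q|Q]; [exact Q|exfalso].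
    assert (0 < (l*m - s*(l*n3))*(l*m + s*(l*n3))) by (apply Rmult_lt_0_compat; lra).
    nra.
  - intros Heq. rewrite Heq in Hsq.
    assert (Hl : l <> 0) by (intro Z; rewrite Z in Ht; lra).
    assert (E : l^2*(n1*e2 - n2*e1)^2 = 0) by lra.
    apply Rmult_integral in E. destruct E as [E|E].
    + exfalso. apply Hl. nra.
    + nra.
Qed.

Lemma unit_vector_along d1 d2 :
  exists e1 e2, e1^2 + e2^2 = 1 /\ e1*d1 + e2*d2 = sqrt (d1^2 + d2^2).
Proof.
  set (n := sqrt (d1^2 + d2^2)).
  assert (Hn : n^2 = d1^2 + d2^2)
    by (apply pow2_sqrt, Rplus_le_le_0_compat; apply pow2_ge_0).
  destruct (Req_dec n 0) as [Z|Z].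
  - exists 1, 0. rewrite Z in Hn |- *. split; [ring|nra].
  - exists (d1/n), (d2/n). split; field_simplify; try exact Z; rewrite <- Hn; field; exact Z.
Qed.

(* Indeed, for the unit
   vector e along the spatial chord, s w3 - e . (w1, w2) increases strictly. *)
Lemma null_curve_chord_timelike (w1 w2 w3 lam n1 n2 n3 : R -> R) s t1 t2 :
  t1 < t2 -> s * s = 1 ->
  (forall x, t1 <= x <= t2 -> is_derive w1 x (lam x * n1 x) /\
     is_derive w2 x (lam x * n2 x) /\ is_derive w3 x (lam x * n3 x)) ->
  (forall x, t1 <= x <= t2 -> n1 x ^ 2 + n2 x ^ 2 = n3 x ^ 2) ->
  (forall x, t1 <= x <= t2 -> 0 < s * (lam x * n3 x)) ->
  (forall e1 e2, e1^2 + e2^2 = 1 -> ~ (forall x, t1 < x < t2 -> n1 x * e2 = n2 x * e1)) ->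
  (w1 t2 - w1 t1)^2 + (w2 t2 - w2 t1)^2 < (w3 t2 - w3 t1)^2.
Proof.
  intros Ht Hs Hw Hn Hp Hvar.
  destruct (unit_vector_along (w1 t2 - w1 t1) (w2 t2 - w2 t1)) as [e1 [e2 [He Hd]]].
  set (h := fun x => s * w3 x - e1 * w1 x - e2 * w2 x).
  set (h' := fun x => s * (lam x * n3 x) - (e1 * (lam x * n1 x) + e2 * (lam x * n2 x))).
  assert (Hh : forall x, t1 <= x <= t2 -> is_derive h x (h' x)).
  { intros x Hx. destruct (Hw x Hx) as [D1 [D2 D3]]. unfold h, h'.
    auto_derive.
    - repeat split; eexists; eassumption.
    - apply is_derive_unique in D1, D2, D3.
      change (Derive (fun y => w1 y) x) with (Derive w1 x).
      change (Derive (fun y => w2 y) x) with (Derive w2 x).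
      change (Derive (fun y => w3 y) x) with (Derive w3 x).
      rewrite D1, D2, D3. ring. }
  assert (Hdom : forall x, t1 <= x <= t2 ->
    e1 * (lam x * n1 x) + e2 * (lam x * n2 x) <= s * (lam x * n3 x) /\
    (e1 * (lam x * n1 x) + e2 * (lam x * n2 x) = s * (lam x * n3 x) -> n1 x * e2 = n2 x * e1))
    by (intros x Hx; exact (null_vector_time_dominates _ _ _ _ _ _ _ Hs (Hn x Hx) He (Hp x Hx))).
  assert (Hpos : forall x, t1 <= x <= t2 -> 0 <= h' x)
    by (intros x Hx; unfold h'; destruct (Hdom x Hx); lra).
  assert (Hinc : h t1 < h t2).
  { destruct (Rlt_or_le (h t1) (h t2)) as [|Hflat]; [assumption|exfalso].
    apply (Hvar e1 e2 He). intros x Hx.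
    pose proof (derive_zero_of_not_increasing h h' t1 t2 Hh Hpos Hflat x Hx) as Z.
    apply (Hdom x ltac:(lra)). unfold h' in Z. lra. }
  unfold h in Hinc.
  set (d := sqrt ((w1 t2 - w1 t1)^2 + (w2 t2 - w2 t1)^2)) in Hd.
  assert (Hd0 : 0 <= d) by apply sqrt_pos.
  assert (Hd2 : d^2 = (w1 t2 - w1 t1)^2 + (w2 t2 - w2 t1)^2)
    by (apply pow2_sqrt, Rplus_le_le_0_compat; apply pow2_ge_0).
  assert (Hgt : d < s * (w3 t2 - w3 t1)) by lra.
  replace ((w3 t2 - w3 t1)^2) with ((s * (w3 t2 - w3 t1))^2)
    by (replace ((s * (w3 t2 - w3 t1))^2) with ((s*s) * (w3 t2 - w3 t1)^2) by ring;
        rewrite Hs; ring).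
  rewrite <- Hd2, <- !Rsqr_pow2. apply Rsqr_incrst_1; lra.
Qed.

(* Jets along a curve are handled as families X : nat -> R -> R, X k standing
   for the k-th derivative; [jet3_at X t] says that X k' = X (k+1) at t for
   k <= 2, which is all that the third-order computations below need. *)
Definition jet3_at (X : nat -> R -> R) (t : R) : Prop :=
  forall k, (k <= 2)%nat -> is_derive (X k) t (X (S k) t).

Ltac rewrite_jet_derivatives :=
  repeat match goal with
  | H : jet3_at ?F ?t |- context [Derive (fun x => ?F ?k x) ?t] =>
      let E := fresh in
      assert (E : Derive (fun x => F k x) t = F (S k) t)
        by (apply is_derive_unique, H; lia);
      rewrite E; clear E
  end.

Ltac solve_jet_ex_derive :=
  repeat match goal with
  | |- _ /\ _ => split
  | |- True => exact I
  | H : jet3_at ?F ?t |- ex_derive (fun x => ?F ?k x) ?t =>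
      exact (ex_intro _ _ (H k ltac:(lia)))
  | H : forall k, (k <= 3)%nat -> ex_derive (?F k) ?t |- ex_derive (fun x => ?F ?k x) ?t =>
      exact (H k ltac:(lia))
  end.

Definition radius_jet (X Y : nat -> R -> R) (k : nat) (t : R) : R :=
  let r0 := sqrt (X 0%nat t * X 0%nat t + Y 0%nat t * Y 0%nat t) in
  let r1 := (X 0%nat t * X 1%nat t + Y 0%nat t * Y 1%nat t) / r0 in
  let r2 := (X 1%nat t * X 1%nat t + Y 1%nat t * Y 1%nat t + X 0%nat t * X 2%nat t
             + Y 0%nat t * Y 2%nat t - r1 * r1) / r0 in
  match k with
  | 0%nat => r0
  | 1%nat => r1
  | 2%nat => r2
  | _ => (3 * X 1%nat t * X 2%nat t + 3 * Y 1%nat t * Y 2%nat t + X 0%nat t * X 3%nat t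
          + Y 0%nat t * Y 3%nat t - 3 * r1 * r2) / r0
  end.

Section RadiusJet.
Variables (X Y : nat -> R -> R) (t : R).
Hypothesis off_origin : 0 < X 0%nat t ^ 2 + Y 0%nat t ^ 2.
Local Notation r k := (radius_jet X Y k t).

Lemma radius_jet_cone :
  0 < r 0 /\
  r 0 ^ 2 = X 0%nat t ^ 2 + Y 0%nat t ^ 2 /\
  r 0 * r 1 = X 0%nat t * X 1%nat t + Y 0%nat t * Y 1%nat t /\
  r 0 * r 2 = X 1%nat t ^ 2 + Y 1%nat t ^ 2 + X 0%nat t * X 2%nat t
              + Y 0%nat t * Y 2%nat t - r 1 ^ 2 /\
  r 0 * r 3 = 3 * X 1%nat t * X 2%nat t + 3 * Y 1%nat t * Y 2%nat t
              + X 0%nat t * X 3%nat t + Y 0%nat t * Y 3%nat t - 3 * r 1 * r 2.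
Proof.
  assert (Hr : 0 < r 0) by (apply sqrt_lt_R0; nra).
  split; [exact Hr|].
  unfold radius_jet in *; cbv zeta iota in *.
  split; [rewrite <- Rsqr_pow2, Rsqr_sqrt; nra|].
  repeat split; field; apply Rgt_not_eq; exact Hr.
Qed.

Lemma radius_jet_derive : jet3_at X t -> jet3_at Y t -> jet3_at (radius_jet X Y) t.
Proof.
  intros HX HY k Hk.
  assert (Hq : 0 < X 0%nat t * X 0%nat t + Y 0%nat t * Y 0%nat t) by nra.
  assert (H0 : 0 < sqrt (X 0%nat t * X 0%nat t + Y 0%nat t * Y 0%nat t))
    by (apply sqrt_lt_R0; exact Hq).
  destruct k as [|[|[|k]]]; [| | |lia]; unfold radius_jet; cbv zeta iota;
    auto_derive; try (solve_jet_ex_derive; first [exact Hq | lra]);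
    rewrite_jet_derivatives; field; lra.
Qed.

Lemma radius_jet3_ex_derive :
  (forall k, (k <= 3)%nat -> ex_derive (X k) t) ->
  (forall k, (k <= 3)%nat -> ex_derive (Y k) t) ->
  ex_derive (radius_jet X Y 3) t.
Proof.
  intros HX HY.
  assert (Hq : 0 < X 0%nat t * X 0%nat t + Y 0%nat t * Y 0%nat t) by nra.
  assert (H0 : 0 < sqrt (X 0%nat t * X 0%nat t + Y 0%nat t * Y 0%nat t))
    by (apply sqrt_lt_R0; exact Hq).
  unfold radius_jet; cbv zeta iota. auto_derive. solve_jet_ex_derive; first [exact Hq | lra].
Qed.

End RadiusJet.

(* For a space curve Gamma = (A, B, C) with D = det (Gamma, Gamma', Gamma'') <> 0,
   the osculating plane is w . P = 1 with normal w = (Gamma' x Gamma'') / D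
   (cf. [cramer_solution]); its components are osc_a, osc_b, osc_s. *)
Definition osc_det (A B C : nat -> R -> R) (t : R) : R :=
  det3 (A 0%nat t) (B 0%nat t) (C 0%nat t) (A 1%nat t) (B 1%nat t) (C 1%nat t)
       (A 2%nat t) (B 2%nat t) (C 2%nat t).
Definition osc_a (A B C : nat -> R -> R) (t : R) : R :=
  (B 1%nat t * C 2%nat t - C 1%nat t * B 2%nat t) / osc_det A B C t.
Definition osc_b (A B C : nat -> R -> R) (t : R) : R :=
  (C 1%nat t * A 2%nat t - A 1%nat t * C 2%nat t) / osc_det A B C t.
Definition osc_s (A B C : nat -> R -> R) (t : R) : R :=
  (A 1%nat t * B 2%nat t - B 1%nat t * A 2%nat t) / osc_det A B C t.

(* The speed factor lambda = - det (Gamma', Gamma'', Gamma''') / D^2 of the normal. *)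
Definition osc_lambda (A B C : nat -> R -> R) (t : R) : R :=
  - det3 (A 1%nat t) (B 1%nat t) (C 1%nat t) (A 2%nat t) (B 2%nat t) (C 2%nat t)
         (A 3%nat t) (B 3%nat t) (C 3%nat t) / (osc_det A B C t * osc_det A B C t).

Lemma osc_normal_derive (A B C : nat -> R -> R) t :
  jet3_at A t -> jet3_at B t -> jet3_at C t -> osc_det A B C t <> 0 ->
  is_derive (osc_a A B C) t (osc_lambda A B C t * (B 0%nat t * C 1%nat t - C 0%nat t * B 1%nat t)) /\
  is_derive (osc_b A B C) t (osc_lambda A B C t * (C 0%nat t * A 1%nat t - A 0%nat t * C 1%nat t)) /\
  is_derive (osc_s A B C) t (osc_lambda A B C t * (A 0%nat t * B 1%nat t - B 0%nat t * A 1%nat t)).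
Proof.
  intros HA HB HC HD. unfold osc_det, det3 in HD.
  split; [|split]; unfold osc_a, osc_b, osc_s, osc_lambda, osc_det, det3; auto_derive;
    try (solve_jet_ex_derive; exact HD); rewrite_jet_derivatives; field; exact HD.
Qed.

Lemma osc_time_speed_ex_derive (A B C : nat -> R -> R) t :
  (forall k, (k <= 3)%nat -> ex_derive (A k) t) ->
  (forall k, (k <= 3)%nat -> ex_derive (B k) t) ->
  (forall k, (k <= 3)%nat -> ex_derive (C k) t) ->
  osc_det A B C t <> 0 ->
  ex_derive (fun s => osc_lambda A B C s * (A 0%nat s * B 1%nat s - B 0%nat s * A 1%nat s)) t.
Proof.
  intros HA HB HC HD. unfold osc_det, det3 in HD.
  unfold osc_lambda, osc_det, det3; auto_derive. solve_jet_ex_derive.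
  apply Rmult_integral_contrapositive_currified; exact HD.
Qed.

Definition kepler_jet_along (A B : nat -> R -> R) (a b c : R) (j : nat) (t : R) : R :=
  kepler_jet a b c (A 0%nat t) (B 0%nat t) (A 1%nat t) (B 1%nat t)
             (A 2%nat t) (B 2%nat t) (A 3%nat t) (B 3%nat t) j.

Lemma kepler_jet_along_derive A B a b c t : jet3_at A t -> jet3_at B t ->
  jet3_at (kepler_jet_along A B a b c) t.
Proof.
  intros HA HB j Hj. unfold kepler_jet_along.
  destruct j as [|[|[|j]]]; [| | |lia]; cbn [kepler_jet];
    auto_derive; try solve_jet_ex_derive; rewrite_jet_derivatives; ring.
Qed.

Lemma Derive_n_of_jet (f : R -> R) (K : nat -> R -> R) (U : R -> Prop) (n : nat) :
  (forall s, U s -> locally s U) ->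
  (forall s, f s = K 0%nat s) ->
  (forall j s, (j < n)%nat -> U s -> is_derive (K j) s (K (S j) s)) ->
  forall j s, (j <= n)%nat -> U s -> Derive_n f j s = K j s.
Proof.
  intros HU H0 HK j. induction j as [|j IH]; intros s Hj Hs.
  - exact (H0 s).
  - simpl. rewrite (Derive_ext_loc _ (K j)).
    + apply is_derive_unique. apply HK; [lia|exact Hs].
    + generalize (HU s Hs). apply filter_imp. intros x Hx. apply IH; [lia|exact Hx].
Qed.

Section OsculatingKeplerConics.
Variables (a b : Rbar) (gx gy : R -> R).
Hypothesis smooth_x : smooth_on a b gx.
Hypothesis smooth_y : smooth_on a b gy.
Hypothesis off_origin : forall t, in_itv a b t -> pt gx gy t <> (0, 0).
Hypothesis star : star_shaped a b gx gy.
Hypothesis curvature_nz : forall t, in_itv a b t -> centroaffine_curvature gx gy t <> 0.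
Hypothesis no_hyperosculation : forall t, in_itv a b t -> ~ hyperosculates gx gy t.

(* Jets of the lift Gamma = (X, Y, Z) of the curve to the cone. *)
Local Notation X := (Derive_n gx).
Local Notation Y := (Derive_n gy).
Local Notation Z := (radius_jet X Y).

Lemma itv_between t1 t2 x : in_itv a b t1 -> in_itv a b t2 -> t1 <= x <= t2 -> in_itv a b x.
Proof. unfold in_itv. destruct a, b; simpl; intros; lra. Qed.

Lemma smooth_jet3 g t : smooth_on a b g -> in_itv a b t -> jet3_at (Derive_n g) t.
Proof. intros Hg Ht k _. apply Derive_correct. exact (Hg (S k) t Ht). Qed.

Lemma smooth_ex_derive g t : smooth_on a b g -> in_itv a b t ->
  forall k, (k <= 3)%nat -> ex_derive (Derive_n g k) t.
Proof. intros Hg Ht k _. exact (Hg (S k) t Ht). Qed.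

Lemma lift_off_origin t : in_itv a b t -> 0 < X 0%nat t ^ 2 + Y 0%nat t ^ 2.
Proof.
  intros Ht. pose proof (off_origin t Ht) as Hoff. cbn.
  destruct (Req_dec (gx t) 0) as [E1|E1]; [destruct (Req_dec (gy t) 0) as [E2|E2]|].
  - exfalso. apply Hoff. unfold pt. rewrite E1, E2. reflexivity.
  - pose proof (pow2_gt_0 _ E2). pose proof (pow2_ge_0 (gx t)). simpl in *. lra.
  - pose proof (pow2_gt_0 _ E1). pose proof (pow2_ge_0 (gy t)). simpl in *. lra.
Qed.

Lemma wronskian_nz t : in_itv a b t -> X 0%nat t * Y 1%nat t - Y 0%nat t * X 1%nat t <> 0.
Proof. exact (star t). Qed.

Lemma curvature_numerator_nz t : in_itv a b t ->
  X 1%nat t * Y 2%nat t - Y 1%nat t * X 2%nat t <> 0.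
Proof.
  intros Ht HK. apply (curvature_nz t Ht).
  unfold centroaffine_curvature, det2, vel, acc. cbn [fst snd].
  change (Derive gx t * Derive_n gy 2 t - Derive gy t * Derive_n gx 2 t) with
    (X 1%nat t * Y 2%nat t - Y 1%nat t * X 2%nat t).
  rewrite HK. unfold Rdiv. ring.
Qed.

Lemma lift_jet3 t : in_itv a b t -> jet3_at X t /\ jet3_at Y t /\ jet3_at Z t.
Proof.
  intros Ht.
  pose proof (smooth_jet3 gx t smooth_x Ht). pose proof (smooth_jet3 gy t smooth_y Ht).
  split; [assumption|split; [assumption|]].
  apply radius_jet_derive; auto using lift_off_origin.
Qed.

Lemma lift_cone t : in_itv a b t ->
  0 < Z 0 t /\
  Z 0 t ^ 2 = X 0%nat t ^ 2 + Y 0%nat t ^ 2 /\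
  Z 0 t * Z 1 t = X 0%nat t * X 1%nat t + Y 0%nat t * Y 1%nat t /\
  Z 0 t * Z 2 t = X 1%nat t ^ 2 + Y 1%nat t ^ 2 + X 0%nat t * X 2%nat t
                  + Y 0%nat t * Y 2%nat t - Z 1 t ^ 2 /\
  Z 0 t * Z 3 t = 3 * X 1%nat t * X 2%nat t + 3 * Y 1%nat t * Y 2%nat t
                  + X 0%nat t * X 3%nat t + Y 0%nat t * Y 3%nat t - 3 * Z 1 t * Z 2 t.
Proof. intros Ht. exact (radius_jet_cone X Y t (lift_off_origin t Ht)). Qed.

(* The lift is nondegenerate: D r^3 = [gamma, gamma']^3 <> 0. *)
Lemma lift_det_nz t : in_itv a b t -> osc_det X Y Z t <> 0.
Proof.
  intros Ht HD. destruct (lift_cone t Ht) as [_ [C0 [C1 [C2 _]]]].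
  pose proof (lift_det_cube _ _ _ _ _ _ _ _ _ C0 C1 C2) as E.
  unfold osc_det in HD. rewrite HD, Rmult_0_l in E.
  apply (pow_nonzero _ 3 (wronskian_nz t Ht)). congruence.
Qed.

Lemma osc_normal_derive_along t : in_itv a b t ->
  is_derive (osc_a X Y Z) t (osc_lambda X Y Z t * (Y 0%nat t * Z 1 t - Z 0 t * Y 1%nat t)) /\
  is_derive (osc_b X Y Z) t (osc_lambda X Y Z t * (Z 0 t * X 1%nat t - X 0%nat t * Z 1 t)) /\
  is_derive (osc_s X Y Z) t (osc_lambda X Y Z t * (X 0%nat t * Y 1%nat t - Y 0%nat t * X 1%nat t)).
Proof.
  intros Ht. destruct (lift_jet3 t Ht) as [JX [JY JZ]].
  exact (osc_normal_derive X Y Z t JX JY JZ (lift_det_nz t Ht)).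
Qed.

Lemma Derive_n_kepler_eq a0 b0 c0 j t : (j <= 3)%nat -> in_itv a b t ->
  Derive_n (fun s => kepler_eq (a0, b0, c0) (pt gx gy s)) j t = kepler_jet_along X Y a0 b0 c0 j t.
Proof.
  intros Hj Ht. apply (Derive_n_of_jet _ _ (in_itv a b) 3); auto using in_itv_locally.
  intros k s Hk Hs. destruct (lift_jet3 s Hs) as [JX [JY _]].
  apply kepler_jet_along_derive; [exact JX|exact JY|lia].
Qed.

Lemma osculating_kepler_normal t a0 b0 c0 : in_itv a b t ->
  osculating_kepler gx gy t (a0, b0, c0) ->
  a0 = osc_a X Y Z t /\ b0 = osc_b X Y Z t /\ c0 = Rabs (osc_s X Y Z t).
Proof.
  intros Ht [Hc Hcontact]. simpl in Hc.
  destruct (lift_cone t Ht) as [R0 [C0 [C1 [C2 _]]]].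
  assert (K : forall j, (j <= 2)%nat -> kepler_jet_along X Y a0 b0 c0 j t = 0).
  { intros j Hj. rewrite <- Derive_n_kepler_eq by (auto; lia). apply Hcontact, Hj. }
  destruct (kepler_contact_osculating_plane _ _ _ _ _ _ _ _ _ _ _ R0 C0 C1 C2 a0 b0 c0 Hc K)
    as [s [Hcs [P0 [P1 P2]]]].
  destruct (cramer_unique _ _ _ _ _ _ _ _ _ a0 b0 s (lift_det_nz t Ht) P0 P1 P2)
    as [Ea [Eb Es]].
  unfold osc_a, osc_b, osc_s, osc_det. repeat split; [exact Ea|exact Eb|].
  rewrite <- Es, <- (Rabs_pos_eq c0) by lra.
  apply Rsqr_eq_abs_0. rewrite !Rsqr_pow2. exact Hcs.
Qed.

(* w3 = [gamma', gamma''] / D never vanishes. *)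
Lemma osc_s_nz t : in_itv a b t -> osc_s X Y Z t <> 0.
Proof.
  intros Ht. unfold osc_s, Rdiv.
  apply Rmult_integral_contrapositive_currified;
    [exact (curvature_numerator_nz t Ht) | apply Rinv_neq_0_compat, lift_det_nz, Ht].
Qed.

(* lambda never vanishes: otherwise det (Gamma', Gamma'', Gamma''') = 0, the
   osculating plane has contact 3 with the lift, and the osculating Kepler
   conic hyper-osculates. *)
Lemma osc_lambda_nz t : in_itv a b t -> osc_lambda X Y Z t <> 0.
Proof.
  intros Ht HL. apply (no_hyperosculation t Ht).
  pose proof (lift_det_nz t Ht) as HD. unfold osc_det in HD.
  destruct (lift_cone t Ht) as [_ [C0 [C1 [C2 C3]]]].
  destruct (cramer_solution _ _ _ _ _ _ _ _ _ (X 3%nat t) (Y 3%nat t) (Z 3 t) HD)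
    as [P0 [P1 [P2 P3]]].
  assert (Hdet3 : det3 (X 1%nat t) (Y 1%nat t) (Z 1 t) (X 2%nat t) (Y 2%nat t) (Z 2 t)
                       (X 3%nat t) (Y 3%nat t) (Z 3 t) = 0).
  { unfold osc_lambda, osc_det in HL. apply Rmult_integral in HL as [E|E].
    - lra.
    - exfalso. revert E. apply Rinv_neq_0_compat, Rmult_integral_contrapositive_currified; exact HD. }
  rewrite Hdet3, Rdiv_0_l in P3.
  assert (Hc : Rabs (osc_s X Y Z t) ^ 2 = osc_s X Y Z t ^ 2) by apply pow2_abs.
  exists (osc_a X Y Z t, osc_b X Y Z t, Rabs (osc_s X Y Z t)).
  assert (Hall : contact_ge gx gy t (osc_a X Y Z t, osc_b X Y Z t, Rabs (osc_s X Y Z t)) 3).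
  { intros j Hj. rewrite Derive_n_kepler_eq by assumption.
    exact (osculating_plane_kepler_contact _ _ _ _ _ _ _ _ _ _ _ _ C0 C1 C2 C3 _ _ _ _
             Hc P0 P1 P2 P3 j Hj). }
  split; [split|exact Hall].
  - exact (Rabs_pos_lt _ (osc_s_nz t Ht)).
  - intros j Hj. apply Hall. lia.
Qed.

Lemma time_speed_constant_sign t1 t2 : in_itv a b t1 -> in_itv a b t2 ->
  let f s := osc_lambda X Y Z s * (X 0%nat s * Y 1%nat s - Y 0%nat s * X 1%nat s) in
  forall x, t1 <= x <= t2 -> 0 < f t1 * f x.
Proof.
  intros I1 I2 f. apply nonvanishing_constant_sign.
  - intros x Hx. pose proof (itv_between t1 t2 x I1 I2 Hx) as Ix.
    pose proof (smooth_ex_derive gx x smooth_x Ix) as EX.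
    pose proof (smooth_ex_derive gy x smooth_y Ix) as EY.
    assert (EZ : forall k, (k <= 3)%nat -> ex_derive (Z k) x).
    { intros k Hk. destruct (Nat.le_gt_cases k 2) as [Hk2|Hk2].
      - destruct (lift_jet3 x Ix) as [_ [_ JZ]]. exact (ex_intro _ _ (JZ k Hk2)).
      - replace k with 3%nat by lia. exact (radius_jet3_ex_derive X Y x (lift_off_origin x Ix) EX EY). }
    destruct (osc_time_speed_ex_derive X Y Z x EX EY EZ (lift_det_nz x Ix)) as [l Hl].
    exact (is_derive_continuity_pt _ _ _ Hl).
  - intros x Hx. pose proof (itv_between t1 t2 x I1 I2 Hx) as Ix.
    apply Rmult_integral_contrapositive_currified; [apply osc_lambda_nz|apply wronskian_nz]; exact Ix.
Qed.

(* The spatial part of Gamma x Gamma' is not parallel to a fixed direction e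
   on an open interval: otherwise gamma and gamma' would both be orthogonal to
   e at some point, so [gamma, gamma'] = 0 there. *)
Lemma null_direction_varies t1 t2 : t1 < t2 -> in_itv a b t1 -> in_itv a b t2 ->
  forall e1 e2, e1^2 + e2^2 = 1 ->
  ~ (forall x, t1 < x < t2 ->
       (Y 0%nat x * Z 1 x - Z 0 x * Y 1%nat x) * e2 = (Z 0 x * X 1%nat x - X 0%nat x * Z 1 x) * e1).
Proof.
  intros Hlt I1 I2 e1 e2 He Hpar.
  assert (Iin : forall x, t1 < x < t2 -> in_itv a b x)
    by (intros x Hx; apply (itv_between t1 t2); auto; lra).
  assert (Horth : forall x, t1 < x < t2 -> e2 * X 0%nat x - e1 * Y 0%nat x = 0).
  { intros x Hx. destruct (lift_cone x (Iin x Hx)) as [_ [C0 [C1 _]]].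
    exact (null_direction_radial _ _ _ _ _ _ C0 C1 e1 e2 He (wronskian_nz x (Iin x Hx)) (Hpar x Hx)). }
  set (m := (t1 + t2) / 2).
  assert (Hm : t1 < m < t2) by (unfold m; lra).
  destruct (lift_jet3 m (Iin m Hm)) as [JX [JY _]].
  assert (Hd : is_derive (fun x => e2 * X 0%nat x - e1 * Y 0%nat x) m (e2 * X 1%nat m - e1 * Y 1%nat m)).
  { auto_derive.
    - split; [|split; [|exact I]].
      + exact (ex_intro _ _ (JX 0%nat ltac:(lia))).
      + exact (ex_intro _ _ (JY 0%nat ltac:(lia))).
    - change (Derive (fun x => gx x) m) with (X 1%nat m).
      change (Derive (fun x => gy x) m) with (Y 1%nat m). ring. }
  assert (Horth' : e2 * X 1%nat m - e1 * Y 1%nat m = 0).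
  { refine (is_derive_locally_const _ m _ 0 _ Hd).
    generalize (locally_between t1 t2 m Hm). apply filter_imp. exact Horth. }
  exact (wronskian_nz m (Iin m Hm) (orthogonal_to_unit_parallel _ _ _ _ e1 e2 He (Horth m Hm) Horth')).
Qed.

Lemma osc_chord_timelike t1 t2 : t1 < t2 -> in_itv a b t1 -> in_itv a b t2 ->
  (osc_a X Y Z t2 - osc_a X Y Z t1)^2 + (osc_b X Y Z t2 - osc_b X Y Z t1)^2
  < (osc_s X Y Z t2 - osc_s X Y Z t1)^2.
Proof.
  intros Hlt I1 I2.
  pose proof (time_speed_constant_sign t1 t2 I1 I2) as Hsign; cbv zeta in Hsign.
  set (f1 := osc_lambda X Y Z t1 * (X 0%nat t1 * Y 1%nat t1 - Y 0%nat t1 * X 1%nat t1)) in Hsign.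
  set (s := if Rlt_dec 0 f1 then 1 else -1).
  assert (Hs : s * s = 1) by (unfold s; destruct (Rlt_dec 0 f1); ring).
  apply (null_curve_chord_timelike _ _ _ (osc_lambda X Y Z)
    (fun x => Y 0%nat x * Z 1 x - Z 0 x * Y 1%nat x)
    (fun x => Z 0 x * X 1%nat x - X 0%nat x * Z 1 x)
    (fun x => X 0%nat x * Y 1%nat x - Y 0%nat x * X 1%nat x) s t1 t2 Hlt Hs).
  - intros x Hx. exact (osc_normal_derive_along x (itv_between t1 t2 x I1 I2 Hx)).
  - intros x Hx. destruct (lift_cone x (itv_between t1 t2 x I1 I2 Hx)) as [_ [C0 [C1 _]]].
    exact (lift_cross_null _ _ _ _ _ _ C0 C1).
  - intros x Hx. specialize (Hsign x Hx). unfold s. destruct (Rlt_dec 0 f1); nra.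
  - exact (null_direction_varies t1 t2 Hlt I1 I2).
Qed.

Lemma osc_s_same_sign t1 t2 : t1 <= t2 -> in_itv a b t1 -> in_itv a b t2 ->
  0 < osc_s X Y Z t1 * osc_s X Y Z t2.
Proof.
  intros Hle I1 I2. apply (nonvanishing_constant_sign _ t1 t2); [| |lra].
  - intros x Hx. destruct (osc_normal_derive_along x (itv_between t1 t2 x I1 I2 Hx)) as [_ [_ D]].
    exact (is_derive_continuity_pt _ _ _ D).
  - intros x Hx. exact (osc_s_nz x (itv_between t1 t2 x I1 I2 Hx)).
Qed.

Lemma osculating_kepler_disjoint_ordered t1 t2 : t1 < t2 ->
  in_itv a b t1 -> in_itv a b t2 -> forall v1 v2 q,
  osculating_kepler gx gy t1 v1 -> osculating_kepler gx gy t2 v2 ->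
  kepler_conic v1 q -> kepler_conic v2 q -> False.
Proof.
  intros Hlt I1 I2 [[a1 b1] c1] [[a2 b2] c2] q O1 O2.
  destruct (osculating_kepler_normal t1 a1 b1 c1 I1 O1) as [-> [-> ->]].
  destruct (osculating_kepler_normal t2 a2 b2 c2 I2 O2) as [-> [-> ->]].
  apply timelike_separated_kepler_conics_disjoint.
  - exact (osc_chord_timelike t1 t2 Hlt I1 I2).
  - apply osc_s_same_sign; [lra|exact I1|exact I2].
Qed.

End OsculatingKeplerConics.

Theorem theorem3 (a b : Rbar) (gx gy : R -> R) :
  smooth_on a b gx -> smooth_on a b gy ->
  (forall t, in_itv a b t -> pt gx gy t <> (0, 0)) ->
  star_shaped a b gx gy ->
  (forall t, in_itv a b t -> centroaffine_curvature gx gy t <> 0) ->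
  (forall t, in_itv a b t -> ~ hyperosculates gx gy t) ->
  forall t1 t2 : R, in_itv a b t1 -> in_itv a b t2 -> t1 <> t2 ->
  forall v1 v2 : R * R * R,
    osculating_kepler gx gy t1 v1 -> osculating_kepler gx gy t2 v2 ->
    forall q : R * R, ~ (kepler_conic v1 q /\ kepler_conic v2 q).
Proof.
  intros Sx Sy Hoff Hstar Hcurv Hhyp t1 t2 I1 I2 Hne v1 v2 O1 O2 q [K1 K2].
  pose proof (osculating_kepler_disjoint_ordered a b gx gy Sx Sy Hoff Hstar Hcurv Hhyp)
    as Hordered.
  destruct (Rlt_or_le t1 t2) as [Hlt|Hle].
  - exact (Hordered t1 t2 Hlt I1 I2 v1 v2 q O1 O2 K1 K2).
  - assert (Hlt : t2 < t1) by (destruct Hle; [lra|congruence]).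
    exact (Hordered t2 t1 Hlt I2 I1 v2 v1 q O2 O1 K2 K1).
Qed.
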